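(* Let $D$ be a digraph of order $n$ and let $k\ge 2$ be an integer with $k\le n$. Then: (1) if $k\le n-1$, then $\lambda_{k+1}(D)\le \lambda_k(D)$; (2) if $D'$ is a spanning subgraph of $D$, then $\lambda_k(D')\le \lambda_k(D)$; (3) $\kappa_k(D)\le \lambda_k(D)\le \min\{\delta^+(D),\delta^-(D)\}$.
   Context: Digraphs are finite, without loops or parallel arcs. For $S\subseteq V(D)$, $\lambda_S(D)$ is the maximum number of pairwise arc-disjoint strong subgraphs of $D$ containing $S$, and $\lambda_k(D)=\min\{\lambda_S(D): S\subseteq V(D), |S|=k\}$ (strong subgraph $k$-arc-connectivity). Strong subgraphs $D_1,\dots,D_p$ containing $S$ are internally disjoint if $V(D_i)\cap V(D_j)=S$ and $A(D_i)\cap A(D_j)=\emptyset$ for all $i\ne j$; $\kappa_S(D)$ is the maximum number of internally disjoint strong subgraphs containing $S$, and $\kappa_k(D)=\min\{\kappa_S(D): S\subseteq V(D),|S|=k\}$. $\delta^+(D)$ and $\delta^-(D)$ denote the minimum out-degree and minimum in-degree of $D$. *)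

From mathcomp Require Import all_boot.
Set Implicit Arguments. Unset Strict Implicit. Unset Printing Implicit Defensive.

(* A digraph on the finite vertex type V is an arc relation D : rel V
   (no parallel arcs by construction); it is loopless when [irreflexive D].
   A subgraph H of D is a pair (X, A) of a vertex set and an arc set. *)

Definition subgraph_of (V : finType) (D : rel V) (H : {set V} * {set V * V}) :=
  [forall a in H.2, [&& D a.1 a.2, a.1 \in H.1 & a.2 \in H.1]].

Definition strongb (V : finType) (H : {set V} * {set V * V}) :=
  [forall x in H.1, forall y in H.1, connect [rel u v | (u, v) \in H.2] x y].

Definition strong_sub_containing (V : finType) (D : rel V) (S : {set V})
    (H : {set V} * {set V * V}) :=
  [&& subgraph_of D H, strongb H & S \subset H.1].

Definition arc_disj_family (V : finType) (D : rel V) (S : {set V}) (p : nat) :=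
  [exists F : {ffun 'I_p -> {set V} * {set V * V}},
     [forall i, strong_sub_containing D S (F i)] &&
     [forall i, forall j, (i != j) ==> [disjoint (F i).2 & (F j).2]]].

Definition int_disj_family (V : finType) (D : rel V) (S : {set V}) (p : nat) :=
  [exists F : {ffun 'I_p -> {set V} * {set V * V}},
     [forall i, strong_sub_containing D S (F i)] &&
     [forall i, forall j, (i != j) ==>
        (((F i).1 :&: (F j).1 == S) && [disjoint (F i).2 & (F j).2])]].

(* Maxima: for |S| >= 2 every such subgraph has an arc, so p <= #|V * V|;
   the maximum is therefore taken over p <= #|V * V|. *)
Definition lambdaS (V : finType) (D : rel V) (S : {set V}) : nat :=
  \max_(p < #|{: V * V}|.+1 | arc_disj_family D S p) p.

Definition kappaS (V : finType) (D : rel V) (S : {set V}) : nat :=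
  \max_(p < #|{: V * V}|.+1 | int_disj_family D S p) p.

(* minimum over all k-subsets S (default #|V*V| is never used when k <= #|V|) *)
Definition lambda_k (V : finType) (D : rel V) (k : nat) : nat :=
  \big[minn/#|{: V * V}|]_(S : {set V} | #|S| == k) lambdaS D S.

Definition kappa_k (V : finType) (D : rel V) (k : nat) : nat :=
  \big[minn/#|{: V * V}|]_(S : {set V} | #|S| == k) kappaS D S.

Definition min_outdeg (V : finType) (D : rel V) : nat :=
  \big[minn/#|V|]_(v : V) #|[set w | D v w]|.

Definition min_indeg (V : finType) (D : rel V) : nat :=
  \big[minn/#|V|]_(v : V) #|[set w | D w v]|.

From HB Require Import structures.
From mathcomp Require Import all_boot zify.
Set Implicit Arguments. Unset Strict Implicit. Unset Printing Implicit Defensive.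

(* Every bound is a comparison of the families that the maxima and minima
   range over.  A strong subgraph containing a superset of S, or living in a
   spanning subgraph D' of D, is a strong subgraph of D containing S, and an
   internally disjoint family is arc-disjoint; this gives (1), (2) and the
   first inequality of (3).  For the degree bound, put a vertex v into a
   k-set S: each strong subgraph containing S also contains a second vertex,
   hence an arc leaving v and an arc entering v, and arc-disjointness makes
   these arcs distinct across the family. *)

HB.instance Definition _ := SemiGroup.isComLaw.Build nat minn minnA minnC.

Lemma bigmin_leq_idx (I : finType) (P : pred I) (F : I -> nat) m :
  \big[minn/m]_(i | P i) F i <= m.
Proof. by elim/big_rec: _ => // i x _; apply: leq_trans (geq_minr _ x). Qed.

Lemma bigmin_leq (I : finType) (P : pred I) (F : I -> nat) m i :
  P i -> \big[minn/m]_(j | P j) F j <= F i.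
Proof. by move=> Pi; rewrite (bigD1 i) //= geq_minl. Qed.

Lemma leq_bigmin (I : finType) (P : pred I) (F : I -> nat) m x :
  x <= m -> (forall i, P i -> x <= F i) -> x <= \big[minn/m]_(i | P i) F i.
Proof. by move=> xm xF; apply: (big_ind (leq x)) => // a b xa xb; rewrite leq_min xa xb. Qed.

Lemma bigmin_leq_bigmin (I J : finType) (P : pred I) (Q : pred J) (F : I -> nat)
    (G : J -> nat) m :
    (forall j, Q j -> exists2 i, P i & F i <= G j) ->
  \big[minn/m]_(i | P i) F i <= \big[minn/m]_(j | Q j) G j.
Proof.
move=> QP; apply: leq_bigmin => [|j /QP [i Pi FG]]; first exact: bigmin_leq_idx.
exact: leq_trans (bigmin_leq _ _ Pi) FG.
Qed.

Lemma leq_bigmin_card (T : finType) (A : T -> {set T}) x :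
  0 < #|T| -> (forall v, x <= #|A v|) -> x <= \big[minn/#|T|]_v #|A v|.
Proof.
move=> /card_gt0P [v0 _] xA.
by apply: leq_bigmin => //; apply: leq_trans (xA v0) (max_card _).
Qed.

Lemma disjoint_meeting_leq_card (T : finType) p (F : 'I_p -> {set T}) (A : {set T}) :
    (forall i j, i != j -> [disjoint F i & F j]) ->
    (forall i, exists2 a, a \in F i & a \in A) ->
  p <= #|A|.
Proof.
move=> disjF /fin_all_exists2 [f fF fA].
have f_inj : injective f.
  move=> i j fij; apply/eqP; apply: contraLR (fF j) => ij.
  by rewrite -fij (disjointFr (disjF _ _ ij) (fF i)).
rewrite -[p]card_ord -(card_imset _ f_inj); apply/subset_leq_card/subsetP.
by move=> _ /imsetP [i _ ->].
Qed.

Lemma exists_superset_card (T : finType) (A : {set T}) m :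
  #|A| <= m <= #|T| -> exists2 S : {set T}, A \subset S & #|S| = m.
Proof.
elim: m => [|m IHm] /andP [Am mT]; first by exists A; last by apply/eqP; rewrite -leqn0.
move: Am; rewrite leq_eqVlt => /orP [/eqP <-|Am]; first by exists A.
have /IHm [S AS cardS] : #|A| <= m <= #|T| by rewrite -ltnS Am ltnW.
have [x] : exists x, x \in ~: S.
  by apply/card_gt0P; move: (cardsC S) mT; rewrite cardS; lia.
rewrite inE => xS; exists (x |: S); first exact: subset_trans AS (subsetUr _ _).
by rewrite cardsU1 xS cardS.
Qed.

Lemma card_gt1_neq (T : finType) (S : {set T}) v :
  1 < #|S| -> exists2 u, u \in S & u != v.
Proof.
case/card_gt1P => [x [y [xS yS xy]]].
have [xv|] := eqVneq x v; last by exists x.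
by exists y; rewrite // -xv eq_sym.
Qed.

Section Connect.

Variables (T : finType) (e : rel T) (x y : T).
Hypotheses (xy : connect e x y) (x_neq_y : x != y).

Lemma connect_neq_out : exists z, e x z.
Proof.
case/connectP: xy x_neq_y => [[|z p] /= xp -> //]; last by case/andP: xp; exists z.
by rewrite eqxx.
Qed.

Lemma connect_neq_in : exists z, e z y.
Proof.
case/connectP: xy x_neq_y => p; case/lastP: p => [/= _ -> |p z]; first by rewrite eqxx.
by rewrite rcons_path last_rcons => /andP [_ pz] ->; exists (last x p).
Qed.

End Connect.

Section StrongSubgraphs.

Variables (V : finType) (D : rel V).

Lemma subgraph_of_arc (H : {set V} * {set V * V}) a :
  subgraph_of D H -> a \in H.2 -> D a.1 a.2.
Proof. by move=> /forallP /(_ a) /implyP HD /HD /and3P []. Qed.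

Lemma strongb_connect (H : {set V} * {set V * V}) x y :
  strongb H -> x \in H.1 -> y \in H.1 -> connect [rel u v | (u, v) \in H.2] x y.
Proof. by move=> /forallP /(_ x) /implyP Hx /Hx /forallP /(_ y) /implyP. Qed.

Section Containing.

Variables (S : {set V}) (H : {set V} * {set V * V}) (v : V).
Hypotheses (HS : strong_sub_containing D S H) (vS : v \in S) (S_gt1 : 1 < #|S|).

Let other : exists2 u, u \in S & v != u.
Proof. by have [u uS uv] := card_gt1_neq v S_gt1; exists u; rewrite 1?eq_sym. Qed.

Let H_connect u w : u \in S -> w \in S -> connect [rel a b | (a, b) \in H.2] u w.
Proof.
case/and3P: HS => _ Hstrong /subsetP SH uS wS.
exact: strongb_connect Hstrong (SH _ uS) (SH _ wS).
Qed.

Lemma strong_sub_out_arc : exists2 w, (v, w) \in H.2 & D v w.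
Proof.
have [u uS vu] := other; have [w vw] := connect_neq_out (H_connect vS uS) vu.
by exists w; last by case/and3P: HS => /subgraph_of_arc /(_ vw).
Qed.

Lemma strong_sub_in_arc : exists2 w, (w, v) \in H.2 & D w v.
Proof.
have [u uS vu] := other; rewrite eq_sym in vu.
have [w wv] := connect_neq_in (H_connect uS vS) vu.
by exists w; last by case/and3P: HS => /subgraph_of_arc /(_ wv).
Qed.

End Containing.

Lemma strong_sub_containingS (S S' : {set V}) H :
  S \subset S' -> strong_sub_containing D S' H -> strong_sub_containing D S H.
Proof.
by move=> SS' /and3P [HD Hs S'H]; rewrite /strong_sub_containing HD Hs (subset_trans SS').
Qed.

Lemma strong_sub_containing_subrel (D' : rel V) S H :
  subrel D' D -> strong_sub_containing D' S H -> strong_sub_containing D S H.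
Proof.
move=> D'D /and3P [HD' Hs SH]; apply/and3P; split => //.
apply/forallP => a; apply/implyP => aH.
by move: HD' => /forallP /(_ a) /implyP /(_ aH) /and3P [/D'D -> -> ->].
Qed.

End StrongSubgraphs.

Lemma lambdaS_mono (V : finType) (D D' : rel V) (S S' : {set V}) :
    (forall H, strong_sub_containing D S H -> strong_sub_containing D' S' H) ->
  lambdaS D S <= lambdaS D' S'.
Proof.
move=> DS_D'S'; apply: (sub_le_big leqnn leq_maxl) => p.
case/existsP => F /andP [/forallP sF dF].
by apply/existsP; exists F; rewrite dF andbT; apply/forallP => i; apply: DS_D'S'.
Qed.

Section Lambda.

Variables (V : finType) (D : rel V).

Lemma lambdaS_subset (S S' : {set V}) :
  S \subset S' -> lambdaS D S' <= lambdaS D S.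
Proof. by move=> SS'; apply: lambdaS_mono => H; apply: strong_sub_containingS. Qed.

Lemma lambdaS_subrel (D' : rel V) (S : {set V}) :
  subrel D' D -> lambdaS D' S <= lambdaS D S.
Proof. by move=> D'D; apply: lambdaS_mono => H; apply: strong_sub_containing_subrel. Qed.

Lemma kappaS_le_lambdaS (S : {set V}) : kappaS D S <= lambdaS D S.
Proof.
apply: (sub_le_big leqnn leq_maxl) => p /existsP [F /andP [sF /forallP dF]].
apply/existsP; exists F; rewrite sF; apply/forallP => i; apply/forallP => j.
by apply/implyP => ij; case/andP: (implyP (forallP (dF i) j) ij).
Qed.

Lemma lambdaS_le_card (S : {set V}) (A : {set V * V}) :
    (forall H, strong_sub_containing D S H -> exists2 a, a \in H.2 & a \in A) ->
  lambdaS D S <= #|A|.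
Proof.
move=> HA; apply/bigmax_leqP => p /existsP [F /andP [/forallP sF /forallP dF]].
apply: (@disjoint_meeting_leq_card _ p (fun i => (F i).2)) => [i j ij|i].
  exact: (implyP (forallP (dF i) j) ij).
exact: HA.
Qed.

Lemma lambdaS_le_outdeg (S : {set V}) v :
  v \in S -> 1 < #|S| -> lambdaS D S <= #|[set w | D v w]|.
Proof.
move=> vS S_gt1; have pair_inj : injective (@pair V V v) by move=> w w' [].
rewrite -(card_imset _ pair_inj); apply: lambdaS_le_card => H HS.
have [w vw Dvw] := strong_sub_out_arc HS vS S_gt1.
by exists (v, w) => //; apply/imsetP; exists w; rewrite ?inE.
Qed.

Lemma lambdaS_le_indeg (S : {set V}) v :
  v \in S -> 1 < #|S| -> lambdaS D S <= #|[set w | D w v]|.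
Proof.
move=> vS S_gt1; have pair_inj : injective (fun w : V => (w, v)) by move=> w w' [].
rewrite -(card_imset _ pair_inj); apply: lambdaS_le_card => H HS.
have [w wv Dwv] := strong_sub_in_arc HS vS S_gt1.
by exists (w, v) => //; apply/imsetP; exists w; rewrite ?inE.
Qed.

Lemma lambda_k_succ_le k : k < #|V| -> lambda_k D k.+1 <= lambda_k D k.
Proof.
move=> kV; apply: bigmin_leq_bigmin => S /eqP cardS.
have [|S' SS' cardS'] := @exists_superset_card _ S k.+1; first by rewrite cardS leqnSn.
by exists S'; rewrite ?cardS' ?lambdaS_subset.
Qed.

Lemma lambda_k_subrel (D' : rel V) k : subrel D' D -> lambda_k D' k <= lambda_k D k.
Proof. by move=> D'D; apply: bigmin_leq_bigmin => S kS; exists S; rewrite ?lambdaS_subrel. Qed.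

Lemma kappa_k_le_lambda_k k : kappa_k D k <= lambda_k D k.
Proof. by apply: bigmin_leq_bigmin => S kS; exists S; rewrite ?kappaS_le_lambdaS. Qed.

Lemma lambda_k_le_vertex_bound k (f : V -> nat) :
    1 < k <= #|V| ->
    (forall (S : {set V}) v, v \in S -> 1 < #|S| -> lambdaS D S <= f v) ->
  forall v, lambda_k D k <= f v.
Proof.
case/andP => k_gt1 kV Sf v.
have [|S vS cardS] := @exists_superset_card _ [set v] k; first by rewrite cards1 ltnW.
rewrite sub1set in vS.
by apply: leq_trans (bigmin_leq _ _ _) (Sf _ _ vS _); rewrite cardS.
Qed.

Lemma lambda_k_le_min_outdeg k : 1 < k <= #|V| -> lambda_k D k <= min_outdeg D.
Proof.
move=> kV; apply: leq_bigmin_card; first by case/andP: kV => /ltnW; apply: leq_trans.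
exact: lambda_k_le_vertex_bound kV lambdaS_le_outdeg.
Qed.

Lemma lambda_k_le_min_indeg k : 1 < k <= #|V| -> lambda_k D k <= min_indeg D.
Proof.
move=> kV; apply: leq_bigmin_card; first by case/andP: kV => /ltnW; apply: leq_trans.
exact: lambda_k_le_vertex_bound kV lambdaS_le_indeg.
Qed.

End Lambda.

Theorem proposition3p1 (V : finType) (D : rel V) (n k : nat) :
  irreflexive D -> #|V| = n -> 2 <= k -> k <= n ->
  [/\ (k <= n - 1 -> lambda_k D k.+1 <= lambda_k D k),
      (forall D' : rel V, irreflexive D' -> subrel D' D ->
         lambda_k D' k <= lambda_k D k)
    & kappa_k D k <= lambda_k D k /\
      lambda_k D k <= minn (min_outdeg D) (min_indeg D)].
Proof.
move=> _ <- k_gt1 kV; have k_range : 1 < k <= #|V| by rewrite k_gt1 kV.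
split.
- by move=> kV1; apply: lambda_k_succ_le; lia.
- by move=> D' _; apply: lambda_k_subrel.
- by rewrite kappa_k_le_lambda_k leq_min lambda_k_le_min_outdeg ?lambda_k_le_min_indeg.
Qed.
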